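(* Let $s$ be a non-empty string with $r$ maximal runs. Every admissible bilateral run-peeling decomposition of $s$ emits at least $\lceil r/2\rceil$ tokens, and the Flashback decomposition attains this minimum: the number of tokens of $\mathcal{F}(s)$ other than the sentinel token $\tau_0=(\texttt{@}\texttt{\$},1)$ is exactly $\lceil r/2\rceil$.
   Context: A maximal run of a string is a maximal block of consecutive equal symbols. An admissible bilateral run-peeling decomposition of a non-empty string $s$ is obtained by repeatedly applying the following rule to an active span (initially all of $s$) until it is consumed: (Termination) if the active span consists of a single run or of two adjacent runs, emit one terminal token for the span and stop; (Peeling step) otherwise, let $L$ be the length of the span's leading run (longest prefix of one repeated symbol) and $R$ the length of its trailing run (longest suffix of one repeated symbol), choose any integers $x\in\{1,\dots,L\}$ and $y\in\{1,\dots,R\}$, emit one token formed by the peeled prefix of length $x$ and the peeled suffix of length $y$, and continue with the remaining middle as the active span. The Flashback decomposition $\mathcal{F}(s)$: let $\texttt{@},\texttt{\$}$ be distinct symbols not occurring in $s$, $\hat s=\texttt{@}\,s\,\texttt{\$}$ with positions $1,\dots,n+2$ ($n=|s|$), $\hat s[i..j)$ the substring at positions $i,\dots,j-1$. Starting from active span $[lo,hi)=[1,n+3)$: if $lo\ge hi$, stop. Let $\ell$ be the leading-run length of $\hat s[lo..hi)$. If $\ell=hi-lo$, append $(\hat s[lo..hi),0)$ and stop. Otherwise let $\hat s[r'..hi)$ be the trailing run of $\hat s[lo..hi)$ and $\sigma=\hat s[lo..lo+\ell)\cdot\hat s[r'..hi)$; if $lo+\ell\ge r'$, append $(\sigma,0)$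 and stop; otherwise append $(\sigma,\ell)$ and repeat with $[lo+\ell,r')$. *)

From mathcomp Require Import all_boot.
Set Implicit Arguments. Unset Strict Implicit. Unset Printing Implicit Defensive.

Section Strings.
Variable T : eqType.

Fixpoint nruns (s : seq T) : nat :=
  match s with
  | [::] => 0
  | x :: u => match u with
              | [::] => 1
              | y :: _ => (x != y) + nruns u
              end
  end.

Definition leadlen (u : seq T) : nat :=
  match u with
  | [::] => 0
  | x :: u' => (find (fun y => y != x) u').+1
  end.

Definition traillen (u : seq T) : nat := leadlen (rev u).

Inductive token : Type :=
  | TermTok of seq T
  | PeelTok of seq T & seq T.

Inductive admissible : seq T -> seq token -> Prop :=
  | adm_term (s : seq T) :
      s != [::] -> nruns s <= 2 -> admissible s [:: TermTok s]
  | adm_peel (s : seq T) (x y : nat) (toks : seq token) :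
      2 < nruns s ->
      0 < x <= leadlen s -> 0 < y <= traillen s ->
      admissible (drop x (take (size s - y) s)) toks ->
      admissible s (PeelTok (take x s) (drop (size s - y) s) :: toks).

Definition sym : eqType := (bool + T)%type.
Definition at_sym : sym := inl true.
Definition dollar_sym : sym := inl false.

(* \hat s = @ s $ , positions 1 .. n+2. *)
Definition hat (s : seq T) : seq sym := at_sym :: map inr s ++ [:: dollar_sym].

(* \hat s[i..j) : positions i, ..., j-1 (1-based). *)
Definition subs (u : seq sym) (i j : nat) : seq sym := take (j - i) (drop i.-1 u).

Definition leadlen_sym (u : seq sym) : nat :=
  match u with
  | [::] => 0
  | x :: u' => (find (fun y => y != x) u').+1
  end.

Fixpoint fb_aux (u : seq sym) (fuel lo hi : nat) : seq (seq sym * nat) :=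
  match fuel with
  | 0 => [::]
  | f.+1 =>
    if hi <= lo then [::] else
    let t := subs u lo hi in
    let l := leadlen_sym t in
    if l == hi - lo then [:: (t, 0)] else
    let r' := hi - leadlen_sym (rev t) in
    let sigma := subs u lo (lo + l) ++ subs u r' hi in
    if r' <= lo + l then [:: (sigma, 0)]
    else (sigma, l) :: fb_aux u f (lo + l) r'
  end.

(* Flashback decomposition F(s): start from [1, n+3).  The fuel n+3 is
   never exhausted, since every non-final step shrinks the span. *)
Definition flashback (s : seq T) : seq (seq sym * nat) :=
  fb_aux (hat s) (size s + 3) 1 (size s + 3).

Definition sentinel_token : seq sym * nat := ([:: at_sym; dollar_sym], 1).

End Strings.

From mathcomp Require Import all_boot zify.
Set Implicit Arguments. Unset Strict Implicit. Unset Printing Implicit Defensive.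

(* A peeling token takes a prefix inside the leading run and a suffix inside
   the trailing run, so it removes at most two runs, and a terminal token
   covers at most two runs: hence at least ceil(r/2) tokens.  Flashback peels
   the whole leading and trailing runs; while a middle remains, its end
   symbols differ from the peeled runs, so every token removes exactly two
   runs, and the last token covers the one or two runs left.  On @s$ the
   first token is the sentinel @$, after which Flashback works on s itself. *)

Lemma cat3_take_drop {A : Type} i j (s : seq A) :
  i <= j -> take i s ++ drop i (take j s) ++ drop j s = s.
Proof.
by move=> le_ij; rewrite -{1}(take_takel s le_ij) catA cat_take_drop cat_take_drop.
Qed.

Lemma last_nseq {A : Type} (x0 a : A) k : 0 < k -> last x0 (nseq k a) = a.
Proof. by case: k => // k _ /=; elim: k. Qed.

Lemma head_rev {A : Type} (x0 : A) s : head x0 (rev s) = last x0 s.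
Proof. by case/lastP: s => [|s x] //; rewrite rev_rcons last_rcons. Qed.

Lemma nruns_cons2 {T : eqType} (a b : T) u :
  nruns [:: a, b & u] = (a != b) + nruns (b :: u).
Proof. by []. Qed.

Section Runs.
Variable S : eqType.
Implicit Types (s u v : seq S) (a b : S).

Lemma nruns_nseq a k : nruns (nseq k a) = (0 < k).
Proof. by elim: k => [|[|k] IH] //; move: IH => /= ->; rewrite eqxx. Qed.

Lemma nruns_cat_le u v : nruns (u ++ v) <= nruns u + nruns v.
Proof.
elim: u => [|a u IH] //.
case: u IH => [|b u] IH; first by case: v {IH} => //= b v; lia.
by rewrite cat_cons !nruns_cons2 -addnA leq_add2l.
Qed.

Lemma nruns_cat_neq x0 u v : u != [::] -> v != [::] ->
  last x0 u != head x0 v -> nruns (u ++ v) = nruns u + nruns v.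
Proof.
case: u => // a u _; case: v => // b v _.
elim: u a => [|c u IH] a; first by rewrite /= => ->.
by move/IH; rewrite !cat_cons !nruns_cons2 => ->; rewrite addnA.
Qed.

Lemma nruns_map (S' : eqType) (g : S -> S') s :
  injective g -> nruns (map g s) = nruns s.
Proof.
move=> inj_g; elim: s => [|a [|b s] IH] //.
by move: IH; rewrite !map_cons !nruns_cons2 (inj_eq inj_g) => ->.
Qed.

Lemma leadlen_le_size s : leadlen s <= size s.
Proof. by case: s => //= a s; rewrite ltnS find_size. Qed.

Lemma leadlen_gt0 s : s != [::] -> 0 < leadlen s.
Proof. by case: s. Qed.

Lemma take_leadlen x0 s k : k <= leadlen s -> take k s = nseq k (head x0 s).
Proof.
case: s => [|a s] /=; first by case: k.
case: k => // k; rewrite ltnS /= => le_k; congr cons.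
elim: s k le_k => [|b s IH] [|k] //=.
by case: (b =P a) => [->|] //= /IH ->.
Qed.

Lemma nth_leadlen x0 s : leadlen s < size s -> nth x0 s (leadlen s) != head x0 s.
Proof. by case: s => //= a s; rewrite ltnS -has_find => /(nth_find x0). Qed.

Lemma traillen_le_size s : traillen s <= size s.
Proof. by rewrite -(size_rev s) leadlen_le_size. Qed.

Lemma traillen_gt0 s : s != [::] -> 0 < traillen s.
Proof. by move=> s_neq0; rewrite leadlen_gt0 // -size_eq0 size_rev size_eq0. Qed.

Lemma drop_traillen x0 s k :
  k <= traillen s -> drop (size s - k) s = nseq k (last x0 s).
Proof.
move=> le_k; rewrite -[LHS]revK -take_rev (take_leadlen x0 le_k).
by rewrite rev_nseq head_rev.
Qed.

Lemma nth_traillen x0 s :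
  traillen s < size s -> nth x0 s (size s - (traillen s).+1) != last x0 s.
Proof.
move=> lt_t; rewrite -head_rev -nth_rev //.
by apply: nth_leadlen; rewrite size_rev.
Qed.

Lemma nruns_take_leadlen s k : k <= leadlen s -> nruns (take k s) <= 1.
Proof.
case: s => [|a s] le_k; first by [].
by rewrite (take_leadlen a le_k) nruns_nseq leq_b1.
Qed.

Lemma nruns_drop_traillen s k : k <= traillen s -> nruns (drop (size s - k) s) <= 1.
Proof.
case: s => [|a s] le_k; first by [].
by rewrite (drop_traillen a le_k) nruns_nseq leq_b1.
Qed.

Lemma nruns_leadlen_size s : s != [::] -> leadlen s = size s -> nruns s = 1.
Proof.
case: s => [|a s] // _ eq_l.
by rewrite -[a :: s]take_size (take_leadlen a (eq_leq (esym eq_l))) nruns_nseq.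
Qed.

Lemma nruns_le2_runs_cover s : size s <= leadlen s + traillen s -> nruns s <= 2.
Proof.
move=> cover; rewrite -(cat_take_drop (size s - traillen s) s).
apply: leq_trans (nruns_cat_le _ _) _.
rewrite -[2]/(1 + 1) leq_add ?nruns_drop_traillen //.
by apply: nruns_take_leadlen; lia.
Qed.

Lemma nruns_peel s : leadlen s + traillen s < size s ->
  nruns s = (nruns (drop (leadlen s) (take (size s - traillen s) s))).+2.
Proof.
case: s => [|x0 s'] // lt_runs; set s := x0 :: s' in lt_runs *.
set l := leadlen s in lt_runs *; set l' := traillen s in lt_runs *.
set mid := drop l (take (size s - l') s).
have l_gt0 : 0 < l by apply: leadlen_gt0.
have l'_gt0 : 0 < l' by apply: traillen_gt0.
have size_mid : size mid = size s - l' - l.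
  by rewrite size_drop size_takel // leq_subr.
have head_mid : head x0 mid != head x0 s.
  rewrite -nth0 nth_drop addn0 nth_take; last by lia.
  by apply: nth_leadlen; lia.
have last_mid : last x0 mid != last x0 s.
  rewrite -nth_last nth_drop nth_take; last by lia.
  have -> : l + (size mid).-1 = size s - l'.+1 by lia.
  by apply: nth_traillen; lia.
have mid_neq0 : mid != [::] by rewrite -size_eq0 size_mid; lia.
have nseq_neq0 k (c : S) : 0 < k -> nseq k c != [::].
  by rewrite -size_eq0 size_nseq; lia.
rewrite -[in LHS](@cat3_take_drop _ l (size s - l') s); last by lia.
rewrite (take_leadlen x0 (leqnn l)) (drop_traillen x0 (leqnn l')) -/mid.
rewrite (nruns_cat_neq (x0 := x0)) ?(nruns_cat_neq (x0 := x0)) ?nseq_neq0 //.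
- by rewrite !nruns_nseq l_gt0 l'_gt0 /= add1n addn1.
- by rewrite -(prednK l'_gt0).
- by case: (mid) mid_neq0.
- rewrite last_nseq // eq_sym.
  by case: (mid) mid_neq0 head_mid => // m ms _ ne; exact: ne.
Qed.

Lemma nruns_gt0 s : s != [::] -> 0 < nruns s.
Proof.
case: s => // a s _; elim: s a => [|b s IH] a //.
by rewrite nruns_cons2 (leq_trans (IH b)) ?leq_addl.
Qed.

End Runs.

Section Peeling.
Variable S : eqType.
Implicit Types (s w : seq S).

Lemma admissible_neq0 s toks : admissible s toks -> s != [::].
Proof. by case=> // s' x y toks'; case: s'. Qed.

Lemma admissible_size_ge s toks : admissible s toks -> (nruns s).+1./2 <= size toks.
Proof.
elim=> [s' _ le2 | s' x y toks' _ /andP[_ le_x] /andP[_ le_y] adm_mid IH].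
  by rewrite /=; lia.
set mid := drop x (take (size s' - y) s') in adm_mid IH.
have le_xy : x <= size s' - y.
  by have := admissible_neq0 adm_mid; rewrite -size_eq0 size_drop size_take_min; lia.
have : nruns s' <= 1 + (nruns mid + 1).
  rewrite -{1}(cat3_take_drop s' le_xy).
  apply: leq_trans (nruns_cat_le _ _) _.
  apply: leq_add; first exact: nruns_take_leadlen.
  by apply: leq_trans (nruns_cat_le _ _) _; rewrite leq_add2l nruns_drop_traillen.
rewrite /=; lia.
Qed.

(* The Flashback loop read on the content of the active span instead of its
   bounds [lo, hi); see [fb_aux_subs]. *)
Fixpoint greedy_peel (fuel : nat) w : seq (seq S * nat) :=
  if fuel is f.+1 then
    if nilp w then [::] else
    let l := leadlen w in
    if l == size w then [:: (w, 0)] else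
    let r := size w - traillen w in
    let sigma := take l w ++ drop r w in
    if r <= l then [:: (sigma, 0)]
    else (sigma, l) :: greedy_peel f (drop l (take r w))
  else [::].

Lemma size_greedy_peel f w : w != [::] -> size w <= f ->
  size (greedy_peel f w) = (nruns w).+1./2.
Proof.
elim: f w => [|f IH] w w_neq0 le_wf; first by case: w w_neq0 le_wf.
rewrite /= /nilp size_eq0 (negbTE w_neq0).
case: eqP => [eq_l | _]; first by rewrite nruns_leadlen_size.
case: leqP => [cover | lt_runs].
  have le2 : nruns w <= 2 by apply: nruns_le2_runs_cover; lia.
  by have := nruns_gt0 w_neq0; rewrite /=; lia.
set mid := drop (leadlen w) (take (size w - traillen w) w).
have size_mid : size mid = size w - traillen w - leadlen w.
  by rewrite size_drop size_takel // leq_subr.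
have mid_neq0 : mid != [::] by rewrite -size_eq0 size_mid; lia.
rewrite (@nruns_peel _ w) -/mid; last by lia.
rewrite /= IH // size_mid.
by have := leadlen_gt0 w_neq0; lia.
Qed.

Lemma greedy_peel_step f w : leadlen w + traillen w < size w ->
  greedy_peel f.+1 w =
    (take (leadlen w) w ++ drop (size w - traillen w) w, leadlen w)
    :: greedy_peel f (drop (leadlen w) (take (size w - traillen w) w)).
Proof.
move=> lt_runs; rewrite /= /nilp ifN ?ifN //; first lia.
  by apply/eqP; lia.
by rewrite size_eq0; case: w lt_runs.
Qed.

Lemma greedy_peel_subset f w p : p \in greedy_peel f w -> {subset p.1 <= w}.
Proof.
have mem_peeled u k r x : x \in take k u ++ drop r u -> x \in u.
  by rewrite mem_cat => /orP[/mem_take | /mem_drop].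
elim: f w => [|f IH] w //=.
case: ifP => _ //; case: ifP => _; first by rewrite inE => /eqP ->.
case: ifP => _; first by rewrite inE => /eqP -> /=; apply: mem_peeled.
rewrite inE => /orP[/eqP -> /= | /IH sub x /sub]; first exact: mem_peeled.
by move/mem_drop/mem_take.
Qed.

End Peeling.

Section Flashback.
Variable T : eqType.
Implicit Types (u : seq (sym T)) (s : seq T).

Lemma leadlen_symE u : leadlen_sym u = leadlen u.
Proof. by case: u. Qed.

Lemma size_subs u lo hi : 0 < lo <= hi -> hi <= (size u).+1 ->
  size (subs u lo hi) = hi - lo.
Proof. by move=> /andP[lo_gt0 le_lohi] le_hi; rewrite size_takel // size_drop; lia. Qed.

Lemma subs_subs u lo hi i j : 0 < lo <= i -> i <= j <= hi ->
  subs u i j = drop (i - lo) (take (j - lo) (subs u lo hi)).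
Proof.
move=> /andP[lo_gt0 le_loi] /andP[le_ij le_jhi].
rewrite /subs take_takel; last by lia.
rewrite -(_ : j - i + (i - lo) = j - lo); last by lia.
by rewrite -take_drop drop_drop; congr (take _ (drop _ _)); lia.
Qed.

Lemma fb_aux_subs f u lo hi : 0 < lo <= hi -> hi <= (size u).+1 ->
  fb_aux u f lo hi = greedy_peel f (subs u lo hi).
Proof.
elim: f lo hi => [|f IH] lo hi /andP[lo_gt0 le_lohi] le_hi //=.
rewrite !leadlen_symE; set w := subs u lo hi.
have size_w : size w = hi - lo by apply: size_subs; lia.
rewrite /nilp size_w subn_eq0; case: leqP => // _.
case: eqP => // _; rewrite -/(traillen w).
have le_l := leadlen_le_size w; have le_t := traillen_le_size w.
rewrite size_w in le_l le_t.
have -> : subs u lo (lo + leadlen w) = take (leadlen w) w.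
  by rewrite (@subs_subs u lo hi) ?subnn ?drop0 ?addKn //; lia.
have -> : subs u (hi - traillen w) hi = drop (hi - lo - traillen w) w.
  by rewrite (@subs_subs u lo hi) -/w ?take_oversize ?size_w 1?subnAC //; lia.
case: leqP => cover; case: leqP => cover' //.
1,2: exfalso; lia.
have le_mid : 0 < lo + leadlen w <= hi - traillen w by lia.
rewrite IH //; last by lia.
by rewrite (@subs_subs u lo hi) ?addKn 1?subnAC //; lia.
Qed.

Lemma size_hat s : size (hat s) = (size s).+2.
Proof. by rewrite /= size_cat size_map addn1. Qed.

Lemma flashbackE s : s != [::] ->
  flashback s = sentinel_token T :: greedy_peel (size s).+2 (map inr s).
Proof.
move=> s_neq0; rewrite /flashback addn3 fb_aux_subs ?size_hat //.
have -> : subs (hat s) 1 (size s).+3 = hat s.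
  by rewrite /subs drop0 take_oversize // size_hat.
have lead1 : leadlen (hat s) = 1 by case: s s_neq0.
have trail1 : traillen (hat s) = 1.
  rewrite /traillen /hat rev_cons rev_cat -map_rev.
  by case: (rev s).
rewrite greedy_peel_step lead1 ?trail1; last first.
  by rewrite size_hat; move: s_neq0; rewrite -size_eq0; lia.
have -> : size (hat s) - 1 = (size s).+1 by rewrite size_hat.
congr (_ :: greedy_peel _ _).
  by rewrite /= take0 drop_size_cat ?size_map.
by rewrite /= drop0 take_size_cat ?size_map.
Qed.

Lemma size_flashback_nonsentinel s : s != [::] ->
  size [seq t <- flashback s | t != sentinel_token T] = (nruns s).+1./2.
Proof.
move=> s_neq0; rewrite flashbackE //; set peeled := greedy_peel _ _.
have no_sentinel : all (fun t => t != sentinel_token T) peeled.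
  apply/allP => p /greedy_peel_subset sub_p; apply/negP => /eqP p_eq.
  by have := sub_p (at_sym T); rewrite p_eq mem_head => /(_ isT) /mapP [].
rewrite /= (all_filterP no_sentinel) size_greedy_peel ?nruns_map ?size_map //.
- by move=> ? ? [].
- by rewrite -size_eq0 size_map size_eq0.
- exact: leqW (leqnSn _).
Qed.

End Flashback.

Theorem theorem6p4 (T : eqType) (s : seq T) :
  s != [::] ->
  (forall toks : seq (token T), admissible s toks ->
     (nruns s).+1./2 <= size toks) /\
  size [seq t <- flashback s | t != sentinel_token T] = (nruns s).+1./2.
Proof.
move=> s_neq0; split; last exact: size_flashback_nonsentinel.
by move=> toks; apply: admissible_size_ge.
Qed.
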